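(* Let $V$ be a real vector space of odd finite dimension and $G\le\mathrm{GL}(V)$ a finite group such that $V$ is an irreducible $\mathbb{R}G$-module. Let $H$ be a characteristic subgroup of $G$ and let $S$ be an irreducible $\mathbb{R}H$-submodule of $V$. If the pair $(H,S)$ has the $E1$-property, then the pair $(G,V)$ has the $E1$-property.
   Context: For a finite group $G$, a finite-dimensional $\mathbb{R}G$-module $V$ with representation $\rho\colon G\to\mathrm{GL}(V)$, and $n\in\mathrm{GL}(V)$ of finite order normalizing $\rho(G)$, the triple $(G,V,n)$ has the $E1$-property if there is $g\in G$ such that $\rho(g)n$ has eigenvalue $1$. The pair $(G,V)$ has the $E1$-property if $(G,V,n')$ has the $E1$-property for every $n'\in\mathrm{GL}(V)$ of finite order normalizing $\rho(G)$. *)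

From HB Require Import structures.
From mathcomp Require Import all_boot all_order all_algebra all_fingroup all_solvable all_character.
From mathcomp Require Import all_reals.
Set Implicit Arguments. Unset Strict Implicit. Unset Printing Implicit Defensive.
Import GRing.Theory.
Local Open Scope ring_scope.

(* Matrices act on row vectors from the right (MathComp convention). *)

Definition normalizes_repr (F : fieldType) (gT : finGroupType) (G : {group gT})
  (d : nat) (rG : mx_representation F G d) (N : 'M[F]_d) : Prop :=
  (forall g, g \in G -> exists2 h, h \in G & invmx N *m rG g *m N = rG h) /\
  (forall h, h \in G -> exists2 g, g \in G & invmx N *m rG g *m N = rG h).

Definition finite_order_mx (F : fieldType) (d : nat) (N : 'M[F]_d) : Prop :=
  exists2 k : nat, (0 < k)%N & N ^+ k = 1%:M.

Definition E1_triple (F : fieldType) (gT : finGroupType) (G : {group gT})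
  (d : nat) (rG : mx_representation F G d) (N : 'M[F]_d) : Prop :=
  exists2 g, g \in G & eigenvalue (rG g *m N) 1.

Definition E1_pair (F : fieldType) (gT : finGroupType) (G : {group gT})
  (d : nat) (rG : mx_representation F G d) : Prop :=
  forall N : 'M[F]_d, N \in unitmx -> finite_order_mx N ->
    normalizes_repr rG N -> E1_triple rG N.

From HB Require Import structures.
From mathcomp Require Import all_boot all_order all_algebra all_fingroup all_solvable all_character.
From mathcomp Require Import all_reals polyrcf.
Set Implicit Arguments. Unset Strict Implicit. Unset Printing Implicit Defensive.
Import GRing.Theory.
Local Open Scope ring_scope.

(* Since H is characteristic in G and rG is faithful, a matrix N of finite order normalizing
   rG(G) also normalizes rG(H), hence permutes the homogeneous components of V as an H-module.
   These are permuted transitively by G (Clifford), so X = rG(y) N stabilizes the component W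
   of S for a suitable y in G; X still has finite order and normalizes rG(H).  Counting
   dimensions, dim V = (number of components) * t * dim S with t the multiplicity of S in W,
   so t and dim S are odd.  Over a real closed field odd dim S forces End_H(S) = R, so the
   H-intertwiners from S into W form a t-dimensional space on which X acts (after untwisting
   the H-action); t odd gives a real eigenvector, i.e. an X-stable copy of S inside W.  The
   E1-property of (H, S), transported to that copy, yields h in H such that rG(h) X = rG(hy) N
   fixes a nonzero vector. *)

Section NormalizingMx.
Variables (F : fieldType) (gT : finGroupType) (G H : {group gT}) (n : nat).
Variable rG : mx_representation F G n.

Definition normalizing_r (X : 'M[F]_n) :=
  forall h, h \in H -> exists2 h', h' \in H & rG h *m X = X *m rG h'.

Definition normalizing_l (X : 'M[F]_n) :=
  forall h, h \in H -> exists2 h', h' \in H & X *m rG h = rG h' *m X.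

Lemma normalizing_r_mul X Y :
  normalizing_r X -> normalizing_r Y -> normalizing_r (X *m Y).
Proof.
move=> nX nY h Hh; have [h1 H1 e1] := nX h Hh; have [h2 H2 e2] := nY h1 H1.
by exists h2 => //; rewrite mulmxA e1 -!mulmxA e2.
Qed.

Lemma normalizing_l_mul X Y :
  normalizing_l X -> normalizing_l Y -> normalizing_l (X *m Y).
Proof.
move=> nX nY h Hh; have [h1 H1 e1] := nY h Hh; have [h2 H2 e2] := nX h1 H1.
by exists h2 => //; rewrite -mulmxA e1 mulmxA e2 mulmxA.
Qed.

Lemma normalizing_l_invmx X :
  X \in unitmx -> normalizing_r X -> normalizing_l (invmx X).
Proof.
move=> uX nX h Hh; have [h' Hh' e] := nX h Hh; exists h' => //.
by rewrite -[LHS](mulmxK uX) -(mulmxA (invmx X)) e mulmxA mulVmx // mul1mx.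
Qed.

Lemma normalizing_r_repr g : (H <| G)%g -> g \in G -> normalizing_r (rG g).
Proof.
move=> nsHG Gg h Hh; have Gh := subsetP (normal_sub nsHG) h Hh.
exists (h ^ g)%g; first by rewrite memJ_norm // (subsetP (normal_norm nsHG)).
by rewrite -!repr_mxM ?groupJ // conjgC.
Qed.

Lemma normalizing_l_repr g : (H <| G)%g -> g \in G -> normalizing_l (rG g).
Proof.
move=> nsHG Gg h Hh; have Gh := subsetP (normal_sub nsHG) h Hh.
exists (h ^ g^-1)%g; first by rewrite memJ_norm ?groupV // (subsetP (normal_norm nsHG)).
by rewrite -!repr_mxM ?groupJ ?groupV // conjgCV.
Qed.

Section Submodules.
Variable sHG : H \subset G.
Local Notation rH := (subg_repr rG sHG).

Lemma mxmodule_normalizing m (M : 'M_(m, n)) X :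
  normalizing_l X -> mxmodule rH M -> mxmodule rH (M *m X).
Proof.
move=> nX /mxmoduleP modM; apply/mxmoduleP => h Hh.
have [h' Hh' e] := nX h Hh; rewrite -mulmxA e mulmxA submxMr //.
exact: modM.
Qed.

Lemma mxsimple_normalizing M X : X \in unitmx ->
  normalizing_l X -> normalizing_r X -> mxsimple rH M -> mxsimple rH (M *m X).
Proof.
move=> uX nlX nrX [modM nzM simM]; split.
- exact: mxmodule_normalizing.
- by rewrite -mxrank_eq0 mxrankMfree ?row_free_unit // mxrank_eq0.
move=> U modU sUM nzU.
have : (M <= U *m invmx X)%MS.
  apply: simM; first exact: mxmodule_normalizing (normalizing_l_invmx uX nrX) modU.
    by rewrite -[M](mulmxK uX) submxMr.
  apply: contra nzU => /eqP e; apply/eqP.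
  by rewrite -[U](mulmxKV uX) e mul0mx.
by move/(submxMr X); rewrite -mulmxA mulVmx // mulmx1.
Qed.

Lemma mx_iso_normalizing U V X : X \in unitmx ->
  normalizing_l X -> mx_iso rH U V -> mx_iso rH (U *m X) (V *m X).
Proof.
move=> uX nX [f uf homf eUV]; exists (invmx X *m f *m X).
- by rewrite !unitmx_mul uf uX unitmx_inv uX.
- apply/hom_mxP => h Hh; have [h' Hh' e] := nX h Hh.
  rewrite -(mulmxA U) e !mulmxA !(mulmxK uX).
  by have /hom_mxP hf := homf; rewrite (hf h' Hh') -!mulmxA e.
by rewrite !mulmxA (mulmxK uX) //; apply: eqmxMr.
Qed.

Lemma component_mx_normalizing M X : X \in unitmx ->
  normalizing_l X -> normalizing_r X -> mxsimple rH M ->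
  (component_mx rH M *m X <= component_mx rH (M *m X))%MS.
Proof.
move=> uX nlX nrX simM; have [I [W isoW ->]] := component_mx_def simM.
rewrite sumsmxMr; apply/sumsmx_subP => i _; apply: mx_iso_component.
  exact: mxsimple_normalizing.
exact: mx_iso_normalizing.
Qed.

End Submodules.
End NormalizingMx.

Section NormalizesRepr.
Variables (F : fieldType) (gT : finGroupType) (G : {group gT}) (n : nat).
Variables (rG : mx_representation F G n) (N : 'M[F]_n).
Hypotheses (uN : N \in unitmx) (nN : normalizes_repr rG N).

Lemma normalizes_repr_r g : g \in G -> exists2 g', g' \in G & rG g *m N = N *m rG g'.
Proof.
move=> Gg; have [g' Gg' e] := nN.1 g Gg; exists g' => //.
by rewrite -e !mulmxA mulmxV // mul1mx.
Qed.

Lemma normalizes_repr_l g : g \in G -> exists2 g', g' \in G & N *m rG g = rG g' *m N.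
Proof.
move=> Gg; have [g' Gg' e] := nN.2 g Gg; exists g' => //.
by rewrite -e !mulmxA mulmxV // mul1mx.
Qed.

Lemma normalizes_repr_aut : mx_faithful rG ->
  exists2 f : {morphism G >-> gT}, ('injm f && (f @* G == G))%g
    & {in G, forall g, invmx N *m rG g *m N = rG (f g)}.
Proof.
move=> faithG; have injG := mx_faithful_inj faithG.
pose fN g := odflt 1%g [pick h in G | invmx N *m rG g *m N == rG h].
have fNP g : g \in G -> fN g \in G /\ invmx N *m rG g *m N = rG (fN g).
  move=> Gg; rewrite /fN; case: pickP => [h /andP[Gh /eqP e] //|/= none].
  by have [h Gh e] := nN.1 g Gg; have := none h; rewrite Gh e eqxx.
have fM : {in G &, {morph fN : x y / x * y}%g}.
  move=> x y Gx Gy; have [Gfx ex] := fNP x Gx; have [Gfy ey] := fNP y Gy.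
  have [Gfxy exy] := fNP _ (groupM Gx Gy).
  apply: injG => //; first exact: groupM.
  rewrite (repr_mxM _ Gfx Gfy) -exy -ex -ey (repr_mxM _ Gx Gy).
  by rewrite !mulmxA (mulmxK uN).
pose f : {morphism G >-> gT} := Morphism fM.
have injf : ('injm f)%g.
  apply/injmP => x y Gx Gy /= e; have [_ ex] := fNP x Gx; have [_ ey] := fNP y Gy.
  apply: injG => //; move: ex; rewrite e -ey => /(congr1 (fun M => N *m M *m invmx N)).
  by rewrite !mulmxA !(mulmxK uN) !mulmxV // !mul1mx.
exists f; last by move=> g /fNP[].
rewrite injf eqEcard card_injm // leqnn andbT /=.
by apply/subsetP => _ /morphimP [x Gx _ ->]; have [] := fNP x Gx.
Qed.

Lemma char_normalizing (H : {group gT}) : mx_faithful rG -> (H \char G)%g ->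
  normalizing_r H rG N /\ normalizing_l H rG N.
Proof.
move=> faithG /charP[sHG fixH]; have [f /andP[injf /eqP fG] ef] := normalizes_repr_aut faithG.
have fH := fixH f injf fG; split.
- move=> h Hh; have Gh := subsetP sHG h Hh.
  exists (f h); first by rewrite -fH mem_morphim.
  by rewrite -ef // !mulmxA mulmxV // mul1mx.
- move=> h; rewrite -{1}fH => /morphimP [x Gx Hx ->]; exists x => //.
  by rewrite -ef // !mulmxA mulmxV // mul1mx.
Qed.

Lemma finite_order_repr_mul y : finite_order_mx N -> y \in G ->
  finite_order_mx (rG y *m N).
Proof.
move=> [k k0 Nk] Gy.
have XmE m : exists2 b, b \in G & (rG y *m N) ^+ m = N ^+ m *m rG b.
  elim: m => [|m [b Gb e]]; first by exists 1%g; rewrite ?group1 // !expr0 repr_mx1 mulmx1.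
  have [b' Gb' e'] := normalizes_repr_r (groupM Gb Gy).
  exists b' => //; rewrite exprSr -mulmxE e mulmxA -(mulmxA _ (rG b)).
  by rewrite -repr_mxM // -mulmxA e' mulmxA exprSr mulmxE.
have [b Gb e] := XmE k; exists (k * #|G|)%N; first by rewrite muln_gt0 k0 cardG_gt0.
have rGX m : rG (b ^+ m)%g = rG b ^+ m.
  by elim: m => [|m IH]; rewrite ?repr_mx1 // expgS repr_mxM ?groupX // IH exprS.
by rewrite exprM e Nk mul1mx -rGX expg_cardG // repr_mx1.
Qed.

End NormalizesRepr.

Lemma odd_eigenvalue (R : rcfType) d (A : 'M[R]_d) : odd d -> exists a, eigenvalue A a.
Proof.
move=> odd_d; have [|a ra] := @odd_poly_root R (char_poly A).
  by rewrite size_char_poly /= negbK.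
by exists a; rewrite eigenvalue_root_char.
Qed.

Lemma centgmx_scalar_odd (R : rcfType) (gT : finGroupType) (H : {group gT}) d
    (rS : mx_representation R H d) (A : 'M_d) :
  mx_irreducible rS -> odd d -> centgmx rS A -> exists a, A = a%:M.
Proof.
move=> irrS odd_d cA; have [a ea] := odd_eigenvalue A odd_d; exists a.
apply/eqP; rewrite -subr_eq0; apply/negPn/negP => nzAa.
have : A - a%:M \in unitmx.
  apply: (mx_Schur irrS) nzAa; apply/centgmxP => h Hh.
  by rewrite mulmxBl mulmxBr (centgmxP cA) // scalar_mxC.
by rewrite -row_free_unit -kermx_eq0; move: ea => /negPf ->.
Qed.

Lemma row_free_mulmx_unit (F : fieldType) d n (A : 'M[F]_d) (B : 'M_(d, n)) :
  row_free (A *m B) -> A \in unitmx.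
Proof. by rewrite -row_free_unit -!row_leq_rank => /leq_trans->; rewrite ?mxrankM_maxl. Qed.

Section Intertwiner.
Variables (F : fieldType) (gT : finGroupType) (G H : {group gT}) (n d : nat).
Variables (rG : mx_representation F G n) (rS : mx_representation F H d).

Definition intertwiner (M : 'M[F]_(d, n)) := forall h, h \in H -> rS h *m M = M *m rG h.

Lemma intertwiner_lin I (r : seq I) (P : pred I) (c : I -> F) (M : I -> 'M_(d, n)) :
  (forall i, intertwiner (M i)) -> intertwiner (\sum_(i <- r | P i) c i *: M i).
Proof.
move=> homM h Hh; rewrite mulmx_sumr mulmx_suml; apply: eq_bigr => i _.
by rewrite -scalemxAr homM // scalemxAl.
Qed.

Lemma intertwiner_row_free M :
  mx_irreducible rS -> intertwiner M -> M != 0 -> row_free M.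
Proof.
move=> irrS homM; apply: contraR; rewrite -kermx_eq0 => nzK.
have modK : mxmodule rS (kermx M).
  apply/mxmoduleP => h Hh; apply/sub_kermxP.
  by rewrite -mulmxA homM // mulmxA mulmx_ker mul0mx.
have [_ irrK] := (mx_irrP _).1 irrS.
by move: (irrK _ modK nzK); rewrite -sub1mx => /sub_kermxP; rewrite mul1mx => ->.
Qed.

(* X restricts to a normalizing automorphism of the copy of rS spanned by M,
   which the E1-property of rS then handles. *)
Lemma E1_stable_intertwiner M X : E1_pair rS -> row_free M -> intertwiner M ->
    X \in unitmx -> finite_order_mx X -> normalizing_r H rG X -> normalizing_l H rG X ->
    (M *m X <= M)%MS ->
  exists2 h, h \in H & eigenvalue (rG h *m X) 1.
Proof.
move=> E1S freeM homM uX [k k0 Xk] nrX nlX sMX.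
set Y := M *m X *m pinvmx M.
have YM : Y *m M = M *m X by rewrite mulmxKpV.
have injM := row_free_inj freeM.
have uY : Y \in unitmx.
  by apply: (@row_free_mulmx_unit _ _ _ _ M); rewrite YM /row_free mxrankMfree ?row_free_unit.
have YkM m : Y ^+ m *m M = M *m X ^+ m.
  elim: m => [|m IH]; first by rewrite !expr0 mul1mx mulmx1.
  by rewrite !exprS -!mulmxE -mulmxA IH mulmxA YM -mulmxA.
have YJ g h : g \in H -> h \in H -> rG g *m X = X *m rG h ->
    invmx Y *m rS g *m Y = rS h.
  move=> Hg Hh eX; suff eY : rS g *m Y = Y *m rS h.
    by rewrite -mulmxA eY mulmxA mulVmx // mul1mx.
  apply: injM => /=; rewrite -[LHS]mulmxA YM mulmxA homM // -mulmxA eX.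
  by rewrite mulmxA -YM -[LHS]mulmxA -homM // mulmxA.
have [||g Hg ev] := E1S Y uY.
- by exists k => //; apply: injM; rewrite /= YkM Xk mulmx1 mul1mx.
- split=> [g Hg | h Hh].
    by have [h Hh eX] := nrX g Hg; exists h => //; apply: YJ.
  by have [g Hg eX] := nlX h Hh; exists g => //; apply: YJ.
have [v vE nzv] := eigenvalueP ev.
exists g => //; apply/eigenvalueP; exists (v *m M); last by rewrite mulmx_free_eq0.
rewrite scale1r !mulmxA -(mulmxA v) -homM // mulmxA -(mulmxA _ M) -YM mulmxA.
by rewrite -(mulmxA v) vE scale1r.
Qed.

End Intertwiner.

Lemma mxdirect_sum_mulmx_eq0 (F : fieldType) t d n (M : 'I_t -> 'M[F]_(d, n))
    (U : 'I_t -> 'M[F]_n) (a : 'I_t -> 'M[F]_d) :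
  (forall j, row_free (M j)) -> (forall j, (M j :=: U j)%MS) -> mxdirect (\sum_j U j) ->
  \sum_j a j *m M j = 0 -> forall j, a j = 0.
Proof.
move=> freeM eMU /mxdirect_sumsP dxU e0 i.
apply/eqP; rewrite -(mulmx_free_eq0 _ (freeM i)) -submx0 -(dxU i isT) sub_capmx.
rewrite -(eMU i) submxMl /=; move: e0; rewrite (bigD1 i) //= => /eqP.
rewrite addr_eq0 => /eqP ->; rewrite eqmx_opp; apply: summx_sub_sums => j ji.
by rewrite -(eMU j) submxMl.
Qed.

Section IsotypicComponent.
Variables (R : rcfType) (gT : finGroupType) (G H : {group gT}) (n d : nat).
Variables (rG : mx_representation R G n) (rS : mx_representation R H d).
Hypotheses (irrS : mx_irreducible rS) (odd_d : odd d).
Variables (t : nat) (M : 'I_t -> 'M[R]_(d, n)) (U : 'I_t -> 'M[R]_n).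
Hypotheses (freeM : forall j, row_free (M j)) (eMU : forall j, (M j :=: U j)%MS).
Hypotheses (dxU : mxdirect (\sum_j U j)) (homM : forall j, intertwiner rG rS (M j)).
Local Notation W := (\sum_j U j)%MS.

(* Since End(rS) = R, the M j form a basis of the intertwiners from rS into W. *)
Lemma intertwiner_span (A : 'M_(d, n)) : intertwiner rG rS A -> (A <= W)%MS ->
  exists c : 'I_t -> R, A = \sum_j c j *: M j.
Proof.
move=> homA sAW.
have : (A <= \sum_j <<M j>>)%MS.
  by rewrite (eqmx_sums (fun j _ => eqmx_trans (genmxE (M j)) (eMU j))).
case/sub_sums_genmxP => u eA.
have scal_u j : exists a, u j == a%:M.
  suff /(centgmx_scalar_odd irrS odd_d)[a ->] : centgmx rS (u j) by exists a.
  apply/centgmxP => h Hh; apply/eqP; rewrite eq_sym -subr_eq0; apply/eqP.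
  pose a k := rS h *m u k - u k *m rS h.
  apply: (mxdirect_sum_mulmx_eq0 (a := a) freeM eMU dxU); rewrite /a.
  under eq_bigr => k _ do rewrite mulmxBl -(mulmxA (u k)) homM // !mulmxA.
  rewrite sumrB; under eq_bigr => k _ do rewrite -mulmxA.
  by rewrite -mulmx_sumr -mulmx_suml -eA homA // subrr.
exists (fun j => xchoose (scal_u j)); rewrite eA; apply: eq_bigr => j _.
by move: (xchoose _) (xchooseP (scal_u j)) => a /eqP ->; rewrite mul_scalar_mx.
Qed.

(* The operator A |-> T A X on the t-dimensional space of intertwiners into W has a
   real eigenvector because t is odd. *)
Lemma exists_stable_intertwiner (X : 'M[R]_n) (T : 'M[R]_d) : odd t ->
    T \in unitmx -> (forall A, intertwiner rG rS A -> intertwiner rG rS (T *m A *m X)) ->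
    (W *m X <= W)%MS ->
  exists2 A : 'M_(d, n), row_free A /\ intertwiner rG rS A & (A *m X <= A)%MS.
Proof.
move=> odd_t uT homT sWX.
have coord i : exists r : 'rV[R]_t, T *m M i *m X == \sum_j r 0 j *: M j.
  have [||c ec] := @intertwiner_span (T *m M i *m X); first exact: homT.
    rewrite -mulmxA; apply: submx_trans (submxMl _ _) _.
    apply: submx_trans sWX; apply: submxMr; rewrite (eMU i).
    exact: (sumsmx_sup i).
  by exists (\row_j c j); rewrite ec; apply/eqP; apply: eq_bigr => j _; rewrite mxE.
pose B := \matrix_(i, j) (xchoose (coord i)) 0 j.
have [lam /eigenvalueP [v vB nzv]] := odd_eigenvalue B odd_t.
pose A := \sum_i v 0 i *: M i.
have homA : intertwiner rG rS A by apply: intertwiner_lin.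
have d_gt0 : (0 < d)%N by have [] := (mx_irrP _).1 irrS.
have nzA : A != 0.
  apply: contra nzv => /eqP eA; apply/eqP/rowP => i; rewrite mxE.
  have e : (v 0 i)%:M = 0 :> 'M[R]_d.
    apply: (mxdirect_sum_mulmx_eq0 (a := fun i => (v 0 i)%:M) freeM eMU dxU) => //.
    by rewrite -[RHS]eA; apply: eq_bigr => j _; rewrite mul_scalar_mx.
  have := congr1 (fun C : 'M[R]_d => C (Ordinal d_gt0) (Ordinal d_gt0)) e.
  by rewrite !mxE eqxx mulr1n.
exists A; first exact: conj (intertwiner_row_free irrS homA nzA) homA.
have TAX : T *m A *m X = lam *: A.
  rewrite mulmx_sumr mulmx_suml.
  under eq_bigr => i _ do rewrite -scalemxAr -scalemxAl (eqP (xchooseP (coord i))).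
  under eq_bigr => i _ do rewrite scaler_sumr.
  rewrite exchange_big /= scaler_sumr; apply: eq_bigr => j _.
  under eq_bigr => i _ do rewrite scalerA.
  rewrite -scaler_suml scalerA; congr (_ *: _).
  by have /rowP/(_ j) := vB; rewrite !mxE => <-; apply: eq_bigr => i _; rewrite mxE.
have -> : A *m X = invmx T *m (lam *: A) by rewrite -TAX !mulmxA mulVmx // mul1mx.
by rewrite -scalemxAr scalemx_sub // submxMl.
Qed.

End IsotypicComponent.

Section SubmoduleIntertwiner.
Variables (F : fieldType) (gT : finGroupType) (G H : {group gT}) (n : nat).
Variables (rG : mx_representation F G n) (sHG : H \subset G).
Local Notation rH := (subg_repr rG sHG).
Variables (S : 'M[F]_n) (modS : mxmodule rH S).
Local Notation rS := (submod_repr modS).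

Lemma intertwiner_row_base : intertwiner rG rS (row_base S).
Proof.
by move=> h Hh; have := val_submodJ modS 1%:M Hh; rewrite /val_submod /mulmxr !mul1mx.
Qed.

Lemma row_base_intertwiner f : f \in unitmx -> (S <= dom_hom_mx rH f)%MS ->
  row_free (row_base S *m f) /\ intertwiner rG rS (row_base S *m f).
Proof.
move=> uf homf; split.
  by rewrite /row_free mxrankMfree ?row_free_unit // (eqP (row_base_free S)).
have /hom_mxP homb : (row_base S <= dom_hom_mx rH f)%MS by rewrite eq_row_base.
by move=> h Hh; rewrite mulmxA intertwiner_row_base //; apply: homb.
Qed.

(* X maps S onto an isomorphic copy S X inside its component; T undoes the twist by X
   of the H-action, so that A |-> T A X acts on the intertwiners from rS. *)
Lemma twisting_intertwiner X : X \in unitmx -> normalizing_l H rG X -> normalizing_r H rG X ->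
    mxsimple rH S -> (S *m X <= component_mx rH S)%MS ->
  exists2 T, T \in unitmx &
    forall A, intertwiner rG rS A -> intertwiner rG rS (T *m A *m X).
Proof.
move=> uX nlX nrX simS sSXW.
have [f uf homf eSf] := component_mx_iso simS (mxsimple_normalizing uX nlX nrX simS) sSXW.
have [freeBf homBf] := row_base_intertwiner uf homf.
have injBf := row_free_inj freeBf.
pose T' := row_base S *m X *m pinvmx (row_base S *m f).
have T'B : T' *m (row_base S *m f) = row_base S *m X.
  by rewrite mulmxKpV // (eqmxMr X (eq_row_base S)) (eqmxMr f (eq_row_base S)) eSf.
have uT' : T' \in unitmx.
  apply: (row_free_mulmx_unit (B := row_base S *m f)).
  by rewrite T'B /row_free mxrankMfree ?row_free_unit // (eqP (row_base_free S)).
exists (invmx T'); first by rewrite unitmx_inv.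
move=> A homA h Hh; have [h' Hh' eX] := nlX h Hh.
have eT' : rS h' *m T' = T' *m rS h.
  apply: injBf => /=; rewrite -[LHS]mulmxA T'B mulmxA intertwiner_row_base //.
  by rewrite -mulmxA -eX mulmxA -T'B -[LHS]mulmxA -homBf // -[RHS]mulmxA.
have eT : rS h *m invmx T' = invmx T' *m rS h'.
  by rewrite -[RHS](mulmxK uT') -(mulmxA (invmx T')) eT' mulmxA mulVmx // mul1mx.
by rewrite !mulmxA eT -(mulmxA _ (rS h')) homA // mulmxA -(mulmxA _ (rG h')) -eX mulmxA.
Qed.

End SubmoduleIntertwiner.

Section CliffordComponent.
Variables (F : fieldType) (gT : finGroupType) (G H : {group gT}) (n : nat).
Variables (rG : mx_representation F G n) (nsHG : (H <| G)%g).
Hypothesis irrG : mx_irreducible rG.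
Local Notation rH := (subg_repr rG (normal_sub nsHG)).
Variables (S : 'M[F]_n) (modS : mxmodule rH S) (simS : mxsimple rH S).
Local Notation rS := (submod_repr modS).
Local Notation W := (component_mx rH S).
Variable sH : socleType rH.

Let W0 : sH := PackSocle (component_socle sH simS).

Lemma component_stabilizer N : N \in unitmx -> normalizes_repr rG N ->
    normalizing_l H rG N -> normalizing_r H rG N ->
  exists2 y, y \in G & (W *m (rG y *m N) <= W)%MS.
Proof.
move=> uN nN nlN nrN.
pose W1 : sH := PackSocle (component_socle sH (mxsimple_normalizing uN nlN nrN simS)).
have [x Gx WxW1] := atransP2in (subxx G) (Clifford_atrans irrG sH) (in_setT W0) (in_setT W1).
have eW1 : (W1 : 'M_n) = component_mx rH (S *m N) := PackSocleK _.
have sWNx : (W *m N <= W *m rG x)%MS.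
  apply: submx_trans (component_mx_normalizing uN nlN nrN simS) _.
  by rewrite -eW1 WxW1 (val_Clifford_act _ Gx) PackSocleK.
have [y Gy eNy] := normalizes_repr_l uN nN (groupVr Gx).
exists y => //; rewrite -eNy mulmxA.
apply: submx_trans (submxMr (rG x^-1%g) sWNx) _.
by rewrite -mulmxA -repr_mxM ?groupV // mulgV repr_mx1 mulmx1.
Qed.

Lemma component_intertwiner_basis : odd n ->
  exists t (M : 'I_t -> 'M_(\rank S, n)) (U : 'I_t -> 'M_n),
    [/\ odd t /\ odd (\rank S), forall j, row_free (M j) /\ intertwiner rG rS (M j),
        forall j, (M j :=: U j)%MS, mxdirect (\sum_j U j) & (W :=: \sum_j U j)%MS].
Proof.
move=> odd_n; have [t [x_ /(_ W0) [Gx eUW dxU]]] := Clifford_component_basis irrG sH simS.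
pose U j := S *m rG (x_ W0 j).
have eW0 : (W0 : 'M_n) = W := PackSocleK _.
have eW : (W :=: \sum_j U j)%MS by rewrite -eW0; apply: eqmx_sym.
have rkW : \rank W = (t * \rank S)%N.
  rewrite eW (mxdirectP dxU) /= (eq_bigr (fun _ => \rank S)) ?sum_nat_const ?card_ord //.
  by move=> j _; rewrite mxrankMfree // row_free_unit repr_mx_unit.
have odd_td : odd t /\ odd (\rank S).
  have : odd (#|sH| * (t * \rank S)) by rewrite -rkW -eW0 Clifford_rank_components.
  by rewrite !oddM => /and3P[].
have sUW j : (U j <= W)%MS by rewrite eW (sumsmx_sup j).
have iso j : exists f, [&& f \in unitmx, (S <= dom_hom_mx rH f)%MS & (S *m f == U j)%MS].
  have [f uf homf eSf] := component_mx_iso simS (Clifford_simple simS (Gx j)) (sUW j).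
  by exists f; rewrite uf homf; apply/eqmxP.
exists t, (fun j => row_base S *m xchoose (iso j)), U; split=> // j;
  have /and3P[uf homf /eqmxP eSf] := xchooseP (iso j).
- exact: row_base_intertwiner.
- exact: eqmx_trans (eqmxMr _ (eq_row_base S)) eSf.
Qed.

End CliffordComponent.

Lemma E1_triple_normalizing (R : rcfType) (gT : finGroupType) (G H : {group gT}) n
    (rG : mx_representation R G n) (nsHG : (H <| G)%g) (S : 'M_n)
    (modS : mxmodule (subg_repr rG (normal_sub nsHG)) S) (N : 'M_n) :
    odd n -> mx_irreducible rG -> mxsimple (subg_repr rG (normal_sub nsHG)) S ->
    E1_pair (submod_repr modS) ->
    N \in unitmx -> finite_order_mx N -> normalizes_repr rG N ->
    normalizing_l H rG N -> normalizing_r H rG N ->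
  E1_triple rG N.
Proof.
move=> odd_n irrG simS E1S uN finN nN nlN nrN.
have irrS := (submod_mx_irr modS).2 simS.
suff /exists_inP[g Gg ev] : [exists g in G, eigenvalue (rG g *m N) 1] by exists g.
apply: (socle_exists (subg_repr rG (normal_sub nsHG))) => sH.
have [y Gy sWX] := component_stabilizer irrG simS sH uN nN nlN nrN.
pose X := rG y *m N.
have uX : X \in unitmx by rewrite unitmx_mul repr_mx_unit.
have nlX : normalizing_l H rG X by apply: normalizing_l_mul (normalizing_l_repr _ _ _) nlN.
have nrX : normalizing_r H rG X by apply: normalizing_r_mul (normalizing_r_repr _ _ _) nrN.
have [t [M [U [[odd_t odd_d] homM eMU dxU eW]]]] :=
  component_intertwiner_basis irrG modS simS sH odd_n.
have sSX : (S *m X <= component_mx (subg_repr rG (normal_sub nsHG)) S)%MS.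
  exact: submx_trans (submxMr X (component_mx_id simS)) sWX.
have [T uT homT] := twisting_intertwiner modS uX nlX nrX simS sSX.
have sUX : ((\sum_j U j)%MS *m X <= \sum_j U j)%MS by rewrite -(eqmxMr X eW) -eW.
have [A [freeA homA] sAX] := exists_stable_intertwiner irrS odd_d
  (fun j => (homM j).1) eMU dxU (fun j => (homM j).2) odd_t uT homT sUX.
have [h Hh ev] := E1_stable_intertwiner E1S freeA homA uX
  (finite_order_repr_mul uN nN finN Gy) nrX nlX sAX.
have Gh := subsetP (normal_sub nsHG) h Hh.
by apply/exists_inP; exists (h * y)%g; rewrite ?groupM // repr_mxM // -mulmxA.
Qed.

Theorem lemma3 (R : realType) (gT : finGroupType) (G H : {group gT}) (n : nat)
  (rG : mx_representation R G n)
  (oddn : odd n)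
  (faithG : mx_faithful rG)
  (irrG : mx_irreducible rG)
  (charHG : (H \char G)%g)
  (S : 'M[R]_n)
  (modS : mxmodule (subg_repr rG (char_sub charHG)) S)
  (simS : mxsimple (subg_repr rG (char_sub charHG)) S) :
  E1_pair (submod_repr modS) -> E1_pair rG.
Proof.
move=> E1S N uN finN nN; have [nrN nlN] := char_normalizing uN nN faithG charHG.
have nsHG := char_normal charHG.
move: modS simS E1S; rewrite (bool_irrelevance (char_sub charHG) (normal_sub nsHG)).
move=> modS simS E1S.
exact: E1_triple_normalizing oddn irrG simS E1S uN finN nN nlN nrN.
Qed.
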